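(* Let $A$ be a profinite algebra and let $C$ be any coalgebra with $A=C^*$. If $H$ is a simple left $A$-module which embeds in $A$ (as a left $A$-module), then $H$ is a rational $C^*$-module.
   Context: A profinite algebra is an algebra over a field which is an inverse limit of finite dimensional algebras, equivalently the dual algebra $C^*$ of a coalgebra $C$. A left $C^*$-module $M$ is rational if it arises from a right $C$-comodule structure via $f\rightharpoonup m=\sum m_0f(m_1)$, i.e. for every $m\in M$ there are $m_1,\dots,m_n\in M$ and $c_1,\dots,c_n\in C$ with $f\rightharpoonup m=\sum_i f(c_i)m_i$ for all $f\in C^*$. *)

From HB Require Import structures.
From mathcomp Require Import all_boot all_order all_algebra.
Set Implicit Arguments. Unset Strict Implicit. Unset Printing Implicit Defensive.
Import GRing.Theory.
Local Open Scope ring_scope.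

(* Conventions: k a field; a coalgebra C is a k-vector space with a
   comultiplication given by representatives delta c : seq (C * C)
   (Delta c = sum_{p in delta c} p.1 (x) p.2) and a counit eps.
   Elements of the dual algebra C^* are k-linear maps C -> k. *)

Definition islin (k : fieldType) (V : lmodType k) (f : V -> k) : Prop :=
  forall (a : k) (x y : V), f (a *: x + y) = a * f x + f y.

Definition conv (k : fieldType) (C : lmodType k) (delta : C -> seq (C * C))
  (f g : C -> k) : C -> k :=
  fun c => \sum_(p <- delta c) f p.1 * g p.2.

(* Coalgebra axioms, tested against linear functionals (which separate points
   of C (x) C and C (x) C (x) C over a field). *)
Definition is_coalgebra (k : fieldType) (C : lmodType k)
  (delta : C -> seq (C * C)) (eps : C -> k) : Prop :=
  [/\ islin eps,
      (* linearity of Delta *)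
      (forall f g, islin f -> islin g -> islin (conv delta f g)),
      (forall f g h, islin f -> islin g -> islin h -> forall c : C,
          \sum_(p <- delta c) conv delta f g p.1 * h p.2 =
          \sum_(p <- delta c) f p.1 * conv delta g h p.2)
    &
      (forall f, islin f -> forall c : C,
          conv delta eps f c = f c /\ conv delta f eps c = f c)].

Definition is_dual_module (k : fieldType) (C : lmodType k)
  (delta : C -> seq (C * C)) (eps : C -> k) (M : lmodType k)
  (act : (C -> k) -> M -> M) : Prop :=
  [/\ (forall f, islin f -> forall (a : k) (m1 m2 : M),
          act f (a *: m1 + m2) = a *: act f m1 + act f m2),
      (forall f g, islin f -> islin g -> forall (a : k) (m : M),
          act (fun c => a * f c + g c) m = a *: act f m + act g m),
      (forall f g, islin f -> islin g -> forall m : M,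
          act (conv delta f g) m = act f (act g m))
    & (forall m : M, act eps m = m)].

Definition is_submodule (k : fieldType) (C : lmodType k) (M : lmodType k)
  (act : (C -> k) -> M -> M) (S : M -> Prop) : Prop :=
  [/\ S 0,
      (forall (a : k) (x y : M), S x -> S y -> S (a *: x + y))
    & (forall f, islin f -> forall x, S x -> S (act f x))].

Definition is_simple_module (k : fieldType) (C : lmodType k) (M : lmodType k)
  (act : (C -> k) -> M -> M) : Prop :=
  (exists m : M, m != 0) /\
  forall S : M -> Prop, is_submodule act S ->
    (forall x, S x -> x = 0) \/ (forall x, S x).

Definition embeds_in_dual (k : fieldType) (C : lmodType k)
  (delta : C -> seq (C * C)) (M : lmodType k)
  (act : (C -> k) -> M -> M) : Prop :=
  exists phi : M -> (C -> k),
    [/\ (forall m, islin (phi m)),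
        (forall (a : k) (m1 m2 : M) (c : C),
            phi (a *: m1 + m2) c = a * phi m1 c + phi m2 c),
        (forall f, islin f -> forall m, phi (act f m) = conv delta f (phi m))
      & injective phi].

Definition is_rational (k : fieldType) (C : lmodType k) (M : lmodType k)
  (act : (C -> k) -> M -> M) : Prop :=
  forall m : M, exists s : seq (M * C),
    forall f, islin f -> act f m = \sum_(p <- s) f p.2 *: p.1.

(* Fix m0 != 0 in H and a point c with (phi m0)(c) != 0, phi the embedding
   H -> C^*.  The elements m with (phi (a m))(c) = 0 for all a form a submodule
   missing m0, hence 0 by simplicity.  Since (phi (f a m0))(c) only involves
   the values of f on the finitely many points c_(2)(1), f m0 depends only on
   those values, so m0 is rational.  The rational elements form a submodule, so
   by simplicity again every element is rational. *)

From mathcomp Require Import all_boot all_order all_algebra.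
From Stdlib Require Import Classical FunctionalExtensionality.
From Stdlib Require List.
Set Implicit Arguments. Unset Strict Implicit. Unset Printing Implicit Defensive.
Import GRing.Theory.
Local Open Scope ring_scope.

Section LinearFunctionals.
Variables (k : fieldType) (C : lmodType k).

Definition dual_comb (S : seq (C * (C -> k))) (f : C -> k) : C -> k :=
  fun x => \sum_(q <- S) f q.1 * q.2 x.

Definition islin_seq (S : seq (C * (C -> k))) : Prop :=
  forall q, List.In q S -> islin q.2.

Lemma islin_scale (a : k) (f : C -> k) : islin f -> islin (fun x => a * f x).
Proof. by move=> hf b x y; rewrite hf mulrDr !mulrA (mulrC a b). Qed.

Lemma islin_sub (f g : C -> k) :
  islin f -> islin g -> islin (fun x => f x - g x).
Proof.
move=> hf hg b x y; rewrite hf hg mulrBr opprD !addrA; congr (_ + _).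
by rewrite -!addrA; congr (_ + _); rewrite addrC.
Qed.

Lemma islin_dual_comb (S : seq (C * (C -> k))) (f : C -> k) :
  islin_seq S -> islin (dual_comb S f).
Proof.
rewrite /dual_comb; elim: S => [|q S IH] hS b x y.
  by rewrite !big_nil mulr0 addr0.
have hq : islin q.2 by apply: hS; left.
have IH' := IH (fun r hr => hS r (or_intror hr)).
rewrite !big_cons hq IH' !mulrDr !mulrA (mulrC b (f q.1)) -!addrA.
by congr (_ + _); rewrite addrCA.
Qed.

(* Lagrange-type interpolation: the restrictions of linear functionals to a
   finite set X are spanned by finitely many restrictions e_q, and the
   coordinates are point evaluations f q.1. *)
Lemma islin_interpolation (X : seq C) : exists S : seq (C * (C -> k)),
  islin_seq S /\ forall f, islin f -> {in X, f =1 dual_comb S f}.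
Proof.
elim: X => [|y X [S [hS hX]]]; first by exists [::]; split=> // f hf z.
case: (classic (forall f, islin f -> f y = dual_comb S f y)) => [hy | hy].
  exists S; split=> // f hf z.
  by rewrite in_cons => /predU1P [-> | hz]; [exact: hy | exact: hX].
have [f0 hf0n] := not_all_ex_not _ _ hy.
have [hf0 hne] := imply_to_and _ _ hf0n.
set d := f0 y - dual_comb S f0 y.
have hd : d != 0 by rewrite subr_eq0; apply/eqP.
pose e x := d^-1 * (f0 x - dual_comb S f0 x).
have he : islin e.
  by apply/islin_scale/islin_sub/islin_dual_comb.
have ey : e y = 1 by rewrite /e -/d mulVf.
have eX z : z \in X -> e z = 0 by move=> hz; rewrite /e -hX // subrr mulr0.
(* e is 1 at y and 0 on X; subtracting q.2 y * e from each q.2 keeps the old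
   system valid on X and makes it vanish at y. *)
exists ((y, e) :: [seq (q.1, fun x => q.2 x - q.2 y * e x) | q <- S]); split.
  move=> q /= [<- // | /List.in_map_iff [r [<- hr]]] /=.
  by apply: islin_sub; [exact: hS | exact: islin_scale].
move=> f hf z; rewrite /dual_comb big_cons big_map /=.
under eq_bigr do rewrite mulrBr mulrA.
rewrite sumrB -mulr_suml -/(dual_comb S f y) -/(dual_comb S f z).
rewrite in_cons => /predU1P [-> | hz]; first by rewrite ey !mulr1 subrr addr0.
by rewrite eX // !mulr0 subr0 add0r -hX.
Qed.

End LinearFunctionals.

Section DualModule.
Variables (k : fieldType) (C : lmodType k) (delta : C -> seq (C * C))
  (eps : C -> k) (M : lmodType k) (act : (C -> k) -> M -> M).
Hypothesis hmod : is_dual_module delta eps act.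

Definition rational_elt (m : M) : Prop :=
  exists s : seq (M * C),
    forall f, islin f -> act f m = \sum_(p <- s) f p.2 *: p.1.

Lemma act0 (f : C -> k) : islin f -> act f 0 = 0.
Proof.
have [hA1 _ _ _] := hmod; move=> hf; have := hA1 f hf (-1) 0 0.
by rewrite scaler0 addr0 scaleN1r addNr.
Qed.

Lemma act_lincomb (a : k) (f g : C -> k) (m : M) : islin f -> islin g ->
  act (fun x => a * f x + g x) m = a *: act f m + act g m.
Proof. by have [_ hA2 _ _] := hmod; move=> hf hg; exact: hA2. Qed.

Lemma act_zero_functional (m : M) : act (fun _ => 0) m = 0.
Proof.
have hz : islin (fun _ : C => (0 : k)) by move=> ???; rewrite mulr0 addr0.
have := act_lincomb (-1) m hz hz; rewrite scaleN1r addNr.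
have -> // : (fun c : C => -1 * 0 + 0) = (fun _ : C => (0 : k)).
by apply: functional_extensionality => ?; rewrite mulr0 addr0.
Qed.

Lemma act_dual_comb (S : seq (C * (C -> k))) (f : C -> k) (m : M) :
  islin_seq S -> act (dual_comb S f) m = \sum_(q <- S) f q.1 *: act q.2 m.
Proof.
elim: S => [|q S IH] hS.
  rewrite big_nil -(act_zero_functional m); congr act.
  by apply: functional_extensionality => ?; rewrite /dual_comb big_nil.
have hS' : islin_seq S by move=> r hr; apply: hS; right.
have -> : dual_comb (q :: S) f = (fun x => f q.1 * q.2 x + dual_comb S f x).
  by apply: functional_extensionality => ?; rewrite /dual_comb big_cons.
by rewrite act_lincomb ?IH ?big_cons //; [apply: hS; left | exact: islin_dual_comb].
Qed.

Lemma act_eq_of_act_sub0 (f g : C -> k) (m : M) : islin f -> islin g ->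
  act (fun x => f x - g x) m = 0 -> act f m = act g m.
Proof.
move=> hf hg h0.
have -> : f = (fun x => 1 * (f x - g x) + g x).
  by apply: functional_extensionality => x; rewrite mul1r subrK.
by rewrite act_lincomb ?h0 ?scaler0 ?add0r //; exact: islin_sub.
Qed.

Lemma rational_submodule : is_coalgebra delta eps ->
  is_submodule act rational_elt.
Proof.
have [hA1 _ hA3 _] := hmod; move=> [_ hconv _ _]; split.
- by exists [::] => f hf; rewrite big_nil act0.
- move=> a x y [sx hx] [sy hy].
  exists ([seq (a *: p.1, p.2) | p <- sx] ++ sy) => f hf.
  rewrite hA1 // hx // hy // big_cat big_map /= scaler_sumr; congr (_ + _).
  by apply: eq_bigr => p _; rewrite !scalerA mulrC.
- move=> g hg x [sx hx].
  exists (flatten [seq [seq (g r.2 *: p.1, r.1) | r <- delta p.2] | p <- sx]).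
  move=> f hf; rewrite -hA3 // hx; last exact: hconv.
  rewrite big_flatten big_map /=; apply: eq_bigr => p _.
  rewrite big_map /= /conv scaler_suml; apply: eq_bigr => r _.
  by rewrite scalerA.
Qed.

Lemma rational_of_simple (m0 : M) :
  is_coalgebra delta eps -> is_simple_module act ->
  m0 != 0 -> rational_elt m0 -> is_rational act.
Proof.
move=> hC [_ hsimp] hm0 hrat.
case: (hsimp _ (rational_submodule hC)) => [/(_ m0 hrat) m00 | //].
by move: hm0; rewrite m00 eqxx.
Qed.

Section Embedding.
Variable phi : M -> (C -> k).
Hypothesis phi_lin : forall (a : k) (m1 m2 : M) (c : C),
  phi (a *: m1 + m2) c = a * phi m1 c + phi m2 c.
Hypothesis phi_act : forall f, islin f -> forall m,
  phi (act f m) = conv delta f (phi m).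

Lemma phi0 (c : C) : phi 0 c = 0.
Proof.
have := phi_lin (-1) 0 0 c.
by rewrite scaleNr scale1r oppr0 add0r mulN1r addNr.
Qed.

Definition vanishing_at (c : C) (m : M) : Prop :=
  forall a, islin a -> phi (act a m) c = 0.

Lemma vanishing_at_submodule (c : C) : is_coalgebra delta eps ->
  is_submodule act (vanishing_at c).
Proof.
have [hA1 _ hA3 _] := hmod; move=> [_ hconv _ _]; split.
- by move=> a ha; rewrite act0 // phi0.
- by move=> a x y hx hy b hb; rewrite hA1 // phi_lin hx // hy // mulr0 addr0.
- by move=> f hf x hx a ha; rewrite -hA3 //; apply/hx/hconv.
Qed.

(* phi (a (f m)) c = sum a(c_(1)) f(c_(2)(1)) phi m (c_(2)(2)) *)
Lemma vanishing_at_act (c : C) (f : C -> k) (m : M) : islin f ->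
  {in [seq q.1 | p <- delta c, q <- delta p.2], forall y, f y = 0} ->
  vanishing_at c (act f m).
Proof.
move=> hf f0 a ha; rewrite phi_act // /conv.
apply: big1_seq => p /andP [_ hp]; rewrite phi_act // /conv.
rewrite big1_seq ?mulr0 // => q /andP [_ hq].
by rewrite f0 ?mul0r //; apply/allpairsPdep; exists p, q.
Qed.

Lemma rational_elt_of_phi_neq0 (m0 : M) (c : C) :
  is_coalgebra delta eps -> is_simple_module act ->
  phi m0 c != 0 -> rational_elt m0.
Proof.
move=> hC [_ hsimp] hc.
have [_ _ _ hA4] := hmod.
have van0 : forall x, vanishing_at c x -> x = 0.
  case: (hsimp _ (vanishing_at_submodule c hC)) => // hall.
  have [heps _ _ _] := hC.
  by move: hc; have := hall m0 eps heps; rewrite hA4 => ->; rewrite eqxx.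
have [S [hS hSX]] := islin_interpolation [seq q.1 | p <- delta c, q <- delta p.2].
exists [seq (act q.2 m0, q.1) | q <- S] => f hf; rewrite big_map -act_dual_comb //.
apply: act_eq_of_act_sub0 => //; first exact: islin_dual_comb.
apply/van0/vanishing_at_act; first by apply: islin_sub => //; exact: islin_dual_comb.
by move=> y hy; rewrite /= -hSX // subrr.
Qed.

End Embedding.

End DualModule.

Theorem proposition6p2 (k : fieldType) (C : lmodType k)
  (delta : C -> seq (C * C)) (eps : C -> k) (M : lmodType k)
  (act : (C -> k) -> M -> M) :
  is_coalgebra delta eps ->
  is_dual_module delta eps act ->
  is_simple_module act ->
  embeds_in_dual delta act ->
  is_rational act.
Proof.
move=> hC hmod hsimp [phi [_ phi_lin phi_act phi_inj]].
have [[m0 hm0] _] := hsimp.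
have [c hc] : exists c, phi m0 c != 0.
  apply: NNPP => hall; move/negP: hm0; apply; apply/eqP/phi_inj.
  apply: functional_extensionality => c; rewrite (phi0 phi_lin).
  by apply: NNPP => hc; apply: hall; exists c; apply/eqP.
apply: (rational_of_simple hmod hC hsimp hm0).
exact: (rational_elt_of_phi_neq0 hmod phi_lin phi_act hC hsimp hc).
Qed.
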